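(* Let $\mathcal{A}=(Q,\delta,I,F)$ be a complete Büchi automaton with $n=|Q|$, let $\mathcal{B}_S$ be the automaton produced from $\mathcal{A}$ by Schewe's rank-based complementation construction (described in the context), and let $\mathcal{B}_S^{\mathit{de}}$ be the automaton obtained from the same construction in which every occurrence of $Q_2$ is replaced by $$Q_2^{\mathit{de}} = Q_2\setminus\{(S,O,f,i)\in Q_2 \mid \exists p,q\in S:\ p\preceq_{\mathit{de}} q \wedge f(p)>\lceil f(q)\rceil\},$$ where $\lceil x\rceil$ denotes the smallest even number $\ge x$. Then $\mathcal{L}(\mathcal{B}_S^{\mathit{de}})=\mathcal{L}(\mathcal{B}_S)$.
   Context: Fix a finite nonempty alphabet $\Sigma$. A Büchi automaton (BA) is $\mathcal{A}=(Q,\delta,I,F)$ with finite state set $Q$, transition function $\delta:Q\times\Sigma\to 2^Q$, initial states $I$ and accepting states $F$; it is complete if $\delta(q,a)\neq\emptyset$ for all $q,a$. We write $\delta(P,a)=\bigcup_{p\in P}\delta(p,a)$. A run from $q$ on an infinite word $\alpha=\alpha_0\alpha_1\cdots$ is a sequence $\rho_0\rho_1\cdots$ with $\rho_0=q$ and $\rho_{i+1}\in\delta(\rho_i,\alpha_i)$; it is accepting if some state of $F$ occurs infinitely often. $\mathcal{L}(\mathcal{A})$ is the set of infinite words having an accepting run from some initial state. Delayed simulation: in the simulation game from $(p_0,r_0)$, in round $i$ Spoiler picks a transition $p_i\xrightarrow{\alpha_i}p_{i+1}$ and Duplicator answers with $r_i\xrightarrow{\alpha_i}r_{i+1}$ on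 the same symbol; a Duplicator strategy is a map $\sigma$ with $\sigma(r,p\xrightarrow{a}p')\in\delta(r,a)$ (no lookahead). Duplicator wins the delayed game if for all $i$, $p_i\in F$ implies $r_k\in F$ for some $k\ge i$. The (maximal) delayed simulation $\preceq_{\mathit{de}}$ is given by $p\preceq_{\mathit{de}}r$ iff Duplicator has a winning strategy from $(p,r)$. Schewe's construction. A ranking is $f:Q\to\{0,1,\dots,2n\}$ with $f(q)$ even for $q\in F$; $\mathrm{rank}(f)=\max_q f(q)$. For $S\subseteq Q$, $f$ is $S$-tight if (i) $\mathrm{rank}(f)=r$ is odd, (ii) $\{f(s)\mid s\in S\}\supseteq\{1,3,\dots,r\}$, (iii) $\{f(q)\mid q\notin S\}=\{0\}$; $\mathcal{T}$ is the set of $Q$-tight rankings. $\mathcal{B}_S=(Q',\delta',I',F')$: $Q'=Q_1\cup Q_2$, $Q_1=2^Q$, $Q_2=\{(S,O,f,i)\in 2^Q\times2^Q\times\mathcal{T}\times\{0,2,\dots,2n-2\}\mid f \text{ is } S\text{-tight},\ O\subseteq S\cap f^{-1}(i)\}$; $I'=\{I\}$; $\delta'=\delta_1\cup\delta_2\cup\delta_3$ with $\delta_1(S,a)=\{\delta(S,a)\}$; $\delta_2(S,a)=\{(S',\emptyset,f,0)\in Q_2\mid S'=\delta(S,a), f \text{ is } S'\text{-tight}\}$; and $(S',O',f',i')\in\delta_3((S,O,f,i),a)$ iff $(S',O',f',i')\in Q_2$, $S'=\delta(S,a)$, $f'(q')\le f(q)$ for all $q\in S$, $q'\in\delta(q,a)$,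 $\mathrm{rank}(f)=\mathrm{rank}(f')$, $f'$ is $S'$-tight, and either ($O=\emptyset$, $i'=(i+2)\bmod(\mathrm{rank}(f')+1)$, $O'=f'^{-1}(i')$) or ($O\ne\emptyset$, $i'=i$, $O'=\delta(O,a)\cap f'^{-1}(i)$); $F'=\{\emptyset\}\cup\{(S,\emptyset,f,i)\in Q_2\}$. *)

From mathcomp Require Import all_boot.
Set Implicit Arguments. Unset Strict Implicit. Unset Printing Implicit Defensive.

Record BA (Q Sigma : finType) := mkBA {
  delta : Q -> Sigma -> {set Q};
  init  : {set Q};
  acc   : {set Q} }.

Section Schewe.
Variables (Q Sigma : finType) (A : BA Q Sigma).

Definition complete : Prop := forall q a, delta A q a != set0.

Definition delta_set (P : {set Q}) (a : Sigma) : {set Q} :=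
  \bigcup_(p in P) delta A p a.

Fixpoint dup_play (sigma : Q -> Q -> Sigma -> Q -> Q) (r0 : Q)
   (ps : nat -> Q) (al : nat -> Sigma) (i : nat) : Q :=
  match i with
  | 0 => r0
  | j.+1 => sigma (dup_play sigma r0 ps al j) (ps j) (al j) (ps j.+1)
  end.

(* sigma r p a p' is Duplicator's answer from r to Spoiler's move p -a-> p' *)
Definition dup_strategy (sigma : Q -> Q -> Sigma -> Q -> Q) : Prop :=
  forall r p a p', p' \in delta A p a -> sigma r p a p' \in delta A r a.

Definition delayed_sim (p r : Q) : Prop :=
  exists sigma, dup_strategy sigma /\
    forall (ps : nat -> Q) (al : nat -> Sigma),
      ps 0 = p -> (forall i, ps i.+1 \in delta A (ps i) (al i)) ->
      forall i, ps i \in acc A ->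
        exists2 k, i <= k & dup_play sigma r ps al k \in acc A.

Definition n := #|Q|.

Definition is_ranking (f : {ffun Q -> nat}) : Prop :=
  (forall q, f q <= 2 * n) /\ (forall q, q \in acc A -> ~~ odd (f q)).

Definition rank (f : {ffun Q -> nat}) : nat := \max_(q : Q) f q.

Definition tight (S : {set Q}) (f : {ffun Q -> nat}) : Prop :=
  [/\ odd (rank f),
      (forall k, odd k -> k <= rank f -> exists2 s, s \in S & f s = k) &
      (forall q, q \notin S -> f q = 0)].

Definition inQ2 (S O : {set Q}) (f : {ffun Q -> nat}) (i : nat) : Prop :=
  [/\ is_ranking f, tight setT f, tight S f,
      ~~ odd i /\ i < 2 * n &
      O \subset S :&: [set q | f q == i]].

Definition ceil_even (x : nat) : nat := x + odd x.

Definition inQ2de (S O : {set Q}) (f : {ffun Q -> nat}) (i : nat) : Prop :=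
  inQ2 S O f i /\
  ~ (exists p q, [/\ p \in S, q \in S, delayed_sim p q & ceil_even (f q) < f p]).

Inductive cstate :=
  | Q1st of {set Q}
  | Q2st of {set Q} & {set Q} & {ffun Q -> nat} & nat.

Variable P : {set Q} -> {set Q} -> {ffun Q -> nat} -> nat -> Prop.

Definition ctrans (s : cstate) (a : Sigma) (s' : cstate) : Prop :=
  match s, s' with
  | Q1st T1, Q1st T2 => T2 = delta_set T1 a
  | Q1st T1, Q2st T2 U2 f' i' =>
      [/\ P T2 U2 f' i', T2 = delta_set T1 a, U2 = set0, i' = 0 & tight T2 f']
  | Q2st T1 U1 f i, Q2st T2 U2 f' i' =>
      [/\ P T2 U2 f' i' /\ T2 = delta_set T1 a,
          (forall q q', q \in T1 -> q' \in delta A q a -> f' q' <= f q),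
          rank f = rank f', tight T2 f' &
          ((U1 = set0 /\ i' = (i + 2) %% (rank f' + 1) /\
             U2 = T2 :&: [set q | f' q == i'])
          \/ (U1 != set0 /\ i' = i /\ U2 = delta_set U1 a :&: [set q | f' q == i]))]
  | Q2st _ _ _ _, Q1st _ => False
  end.

Definition caccepting (s : cstate) : Prop :=
  match s with
  | Q1st T1 => T1 = set0
  | Q2st T1 U1 f i => P T1 U1 f i /\ U1 = set0
  end.

Definition clang (w : nat -> Sigma) : Prop :=
  exists r : nat -> cstate,
    [/\ r 0 = Q1st (init A),
        (forall i, ctrans (r i) (w i) (r i.+1)) &
        (forall N, exists2 k, N <= k & caccepting (r k))].

End Schewe.

Definition lang_BS (Q Sigma : finType) (A : BA Q Sigma) : (nat -> Sigma) -> Prop :=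
  clang A (@inQ2 Q Sigma A).
Definition lang_BSde (Q Sigma : finType) (A : BA Q Sigma) : (nat -> Sigma) -> Prop :=
  clang A (@inQ2de Q Sigma A).

(* Take an accepting run of B_S; if it ever enters Q_2, from then on it carries
   rankings f_j of the run DAG of A on w.  The run DAG also has the canonical
   ranking of Kupferman and Vardi, obtained by alternately deleting finite and
   F-free vertices.  It lies below every f_j (acceptance of the run forbids an
   infinite path of constant even f-value), it does not increase along edges, it
   is even on accepting states, and it is monotone under delayed simulation,
   because Duplicator can mirror every path and visit F after each visit of
   Spoiler.  Its maximum over a level eventually becomes a constant odd M, and
   eventually every odd value below M is taken, so from some point on it is a
   tight ranking.  Replaying Schewe's breakpoint construction with it yields an
   accepting run of B_S^de, since p <=de q gives f(p) <= f(q) <= ceil(f(q)). *)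

From mathcomp Require Import all_boot zify.
From Stdlib Require Import Classical ClassicalEpsilon.
Set Implicit Arguments. Unset Strict Implicit. Unset Printing Implicit Defensive.

Section RunDag.
Variables (Q Sigma : finType) (A : BA Q Sigma) (w : nat -> Sigma).

Local Notation F := (acc A).

Definition dag_path (V : Q -> nat -> Prop) (j L : nat) (ps : nat -> Q) :=
  (forall t, j <= t -> t < L -> ps t.+1 \in delta A (ps t) (w t)) /\
  (forall t, j <= t -> t <= L -> V (ps t) t).

Definition dag_ipath (V : Q -> nat -> Prop) (j : nat) (ps : nat -> Q) :=
  forall t, j <= t -> ps t.+1 \in delta A (ps t) (w t) /\ V (ps t) t.

Definition unbounded (V : Q -> nat -> Prop) (q : Q) (j : nat) :=
  forall L, exists2 ps, ps j = q & dag_path V j L ps.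

Definition Ffree (V : Q -> nat -> Prop) (q : Q) (j : nat) :=
  forall L ps, ps j = q -> j <= L -> dag_path V j L ps -> ps L \notin F.

(* Kupferman and Vardi's sub-DAGs G_0 ⊇ G_1 ⊇ ... of the run DAG of A on w:
   G_{2i+1} drops the finite vertices of G_{2i}, G_{2i+2} the F-free ones of G_{2i+1}. *)
Fixpoint level (k : nat) : Q -> nat -> Prop :=
  match k with
  | 0 => fun _ _ => True
  | k.+1 => fun q j => level k q j /\
      (if odd k then ~ Ffree (level k) q j else unbounded (level k) q j)
  end.

Definition path_cat (L : nat) (ps qs : nat -> Q) (t : nat) : Q :=
  if t <= L then ps t else qs t.

Lemma dag_path_shorten V j L L' ps : L' <= L -> dag_path V j L ps -> dag_path V j L' ps.
Proof. by move=> le [step mem]; split=> t jt tL; [apply: step | apply: mem]; lia. Qed.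

Lemma dag_path_later V j j' L ps : j <= j' -> dag_path V j L ps -> dag_path V j' L ps.
Proof. by move=> le [step mem]; split=> t jt tL; [apply: step | apply: mem]; lia. Qed.

Lemma dag_ipath_path V j L ps : dag_ipath V j ps -> dag_path V j L ps.
Proof. by move=> ip; split=> t jt _; case: (ip t jt). Qed.

Lemma dag_ipath_of_paths V j ps : (forall L, dag_path V j L ps) -> dag_ipath V j ps.
Proof. by move=> p t jt; case: (p t.+1) => step mem; split; [apply: step | apply: mem]. Qed.

Lemma dag_ipath_later V j j' ps : j <= j' -> dag_ipath V j ps -> dag_ipath V j' ps.
Proof. by move=> le ip t jt; apply: ip; lia. Qed.

Lemma dag_ipath_unbounded V j ps : dag_ipath V j ps -> unbounded V (ps j) j.
Proof. by move=> ip L; exists ps => //; apply: dag_ipath_path. Qed.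

Lemma unbounded_mem V q j : unbounded V q j -> V q j.
Proof. by case/(_ j) => ps <- [_ mem]; apply: mem. Qed.

Lemma dag_path_join V j L M ps qs : j <= L ->
  dag_path V j L ps -> dag_path V L.+1 M qs ->
  (L < M -> qs L.+1 \in delta A (ps L) (w L)) -> dag_path V j M (path_cat L ps qs).
Proof.
move=> jL [pstep pmem] [qstep qmem] link; rewrite /path_cat.
split=> t jt tM /=; case: (ltngtP t L) => [tL | Lt | eL].
- exact: pstep.
- exact: qstep.
- by rewrite eL; apply: link; rewrite -eL.
- by apply: pmem => //; apply: ltnW.
- exact: qmem.
- by rewrite eL; apply: pmem.
Qed.

Lemma dag_path_cat V j L M ps qs : j <= L -> L <= M -> qs L = ps L ->
  dag_path V j L ps -> dag_path V L M qs -> dag_path V j M (path_cat L ps qs).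
Proof.
move=> jL LM e p q; apply: dag_path_join => //; first exact: dag_path_later q.
by rewrite -e; case: q => step _; apply: step.
Qed.

Lemma dag_ipath_cat V j L ps qs : j <= L -> qs L = ps L ->
  dag_path V j L ps -> dag_ipath V L qs -> dag_ipath V j (path_cat L ps qs).
Proof.
move=> jL e p q; apply: dag_ipath_of_paths => M.
apply: dag_path_shorten (leq_maxl M L) _.
by apply: dag_path_cat => //; [exact: leq_maxr | exact: dag_ipath_path].
Qed.

Lemma dag_path_cons V j L q ps : V q j -> ps j.+1 \in delta A q (w j) ->
  dag_path V j.+1 L ps -> dag_path V j L (path_cat j (fun=> q) ps).
Proof.
move=> Vq link p; apply: dag_path_join => //.
by split=> t ? ?; [lia | have -> : t = j by lia].
Qed.

Lemma dag_path_snoc V j L ps q : j <= L -> dag_path V j L ps ->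
  q \in delta A (ps L) (w L) -> V q L.+1 -> dag_path V j L.+1 (path_cat L ps (fun=> q)).
Proof.
move=> jL p link Vq; apply: dag_path_join => //.
by split=> t ? ?; [lia | have -> : t = L.+1 by lia].
Qed.

Lemma unbounded_pigeonhole V N (X : {set Q}) :
  (forall L, N <= L -> exists2 ps, ps N \in X & dag_path V N L ps) ->
  exists2 q, q \in X & unbounded V q N.
Proof.
move=> long; apply: NNPP => none.
have bound q : exists L, q \in X -> forall ps, ps N = q -> ~ dag_path V N L ps.
  apply: NNPP => nb; apply: none; exists q.
    by apply: NNPP => qX; apply: nb; exists 0.
  move=> L; apply: NNPP => nL; apply: nb; exists L => _ ps e p; apply: nL; exists ps => //.
have [Lq hLq] := choice _ bound.
have [|ps psX p] := long (N + \max_q Lq q); first exact: leq_addr.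
apply: (hLq _ psX ps erefl); apply: dag_path_shorten p.
exact: leq_trans (leq_bigmax (ps N)) (leq_addl _ _).
Qed.

Lemma unbounded_succ V q t : unbounded V q t ->
  exists2 q', q' \in delta A q (w t) & unbounded V q' t.+1.
Proof.
move=> ub; apply: unbounded_pigeonhole => L tL.
have [ps <- p] := ub L; exists ps; first by case: p => step _; apply: step.
exact: dag_path_later p.
Qed.

Lemma dag_ipath_of_invariant (P : Q -> nat -> Prop) q j : P q j ->
  (forall q t, P q t -> exists2 q', q' \in delta A q (w t) & P q' t.+1) ->
  exists2 ps, ps j = q & dag_ipath P j ps.
Proof.
move=> Pq inv.
have next (x : Q * nat) : exists y, P x.1 x.2 -> y \in delta A x.1 (w x.2) /\ P y x.2.+1.
  case: (classic (P x.1 x.2)) => [/inv[y qy Py] | nP]; first by exists y.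
  by exists x.1 => /nP.
have [nx hnx] := choice _ next.
pose step x := (nx x, x.2.+1).
have iter2 m : (iter m step (q, j)).2 = j + m.
  by elim: m => [|m /= ->]; rewrite ?addn0 ?addnS.
have iter1 m : P (iter m step (q, j)).1 (j + m).
  elim: m => [|m IH]; first by rewrite addn0.
  by rewrite addnS /=; have := hnx (iter m step (q, j)); rewrite iter2 => /(_ IH)[].
exists (fun t => (iter (t - j) step (q, j)).1); first by rewrite subnn.
move=> t jt; rewrite subSn //=; have := iter1 (t - j); rewrite subnKC // => Pt.
by have := hnx (iter (t - j) step (q, j)); rewrite iter2 subnKC // => /(_ Pt)[].
Qed.

Lemma unbounded_ipath V q j : unbounded V q j -> exists2 ps, ps j = q & dag_ipath V j ps.
Proof.
move=> ub; have [ps e ip] := dag_ipath_of_invariant ub (@unbounded_succ V).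
by exists ps => // t jt; case: (ip t jt) => step /unbounded_mem.
Qed.

Lemma Ffree_later V j L ps : Ffree V (ps j) j -> j <= L -> dag_path V j L ps ->
  Ffree V (ps L) L.
Proof.
move=> ff jL p M qs e LM q.
have := ff M _ _ (leq_trans jL LM) (dag_path_cat jL LM e p q).
rewrite /path_cat jL; case: leqP => [ML | _] /(_ erefl) //.
have eM : M = L by lia.
by rewrite eM -e.
Qed.

Lemma dag_path_backward V N (X : nat -> {set Q}) :
  (forall t q', N <= t -> q' \in X t.+1 -> exists2 q, q \in X t & q' \in delta A q (w t)) ->
  (forall t q, N <= t -> q \in X t -> V q t) ->
  forall d q', q' \in X (N + d) ->
    exists2 ps, ps N \in X N & ps (N + d) = q' /\ dag_path V N (N + d) ps.
Proof.
move=> back mem; elim=> [|d IH] q'.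
  rewrite addn0 => q'X; exists (fun=> q') => //; split => //.
  by split=> t Nt tN; [lia | rewrite (_ : t = N); [exact: mem q'X | lia]].
rewrite addnS => q'X; have [|q qX link] := back (N + d) q' _ q'X; first exact: leq_addr.
have [ps psX [e p]] := IH q qX.
exists (path_cat (N + d) ps (fun=> q')); first by rewrite /path_cat leq_addr.
split; first by rewrite /path_cat ltnn.
by apply: dag_path_snoc (leq_addr d N) p _ (mem _ _ _ q'X); rewrite ?e //; lia.
Qed.

Lemma backward_family_unbounded V N (X : nat -> {set Q}) :
  (forall t, N <= t -> X t != set0) ->
  (forall t q', N <= t -> q' \in X t.+1 -> exists2 q, q \in X t & q' \in delta A q (w t)) ->
  (forall t q, N <= t -> q \in X t -> V q t) ->
  exists2 q, q \in X N & unbounded V q N.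
Proof.
move=> ne back mem; apply: unbounded_pigeonhole => L NL.
have /set0Pn[q' q'X] := ne L NL; rewrite -(subnKC NL) in q'X *.
by have [ps psX [_ p]] := dag_path_backward back mem q'X; exists ps.
Qed.

Lemma level_antimono k l q j : k <= l -> level l q j -> level k q j.
Proof. by move=> /subnK <-; elim: (l - k) => // d IH; rewrite addSn => -[/IH]. Qed.

Lemma level_odd_ipath k q j : odd k -> level k q j ->
  exists2 ps, ps j = q & dag_ipath (level k) j ps.
Proof.
case: k => [//|k] /= /negbTE ev [_]; rewrite ev => /unbounded_ipath[ps e ip].
exists ps => // t jt; have [step lv] := ip t jt; split => //=; split => //.
by apply: dag_ipath_unbounded; apply: dag_ipath_later ip.
Qed.

Lemma level_pred k q q' j : q' \in delta A q (w j) -> level k q' j.+1 -> level k q j.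
Proof.
move=> link; elim: k => [//|k IH] /= [/IH lq X]; split => //.
have cons L ps : ps j.+1 = q' -> dag_path (level k) j.+1 L ps ->
    dag_path (level k) j L (path_cat j (fun=> q) ps).
  by move=> e; apply: dag_path_cons; rewrite ?e.
case: ifP X => _ X.
- move=> ff; apply: X => L ps e jL p.
  have := ff L _ _ (ltnW jL) (cons L ps e p).
  by rewrite /path_cat leqnn leqNgt jL => /(_ erefl).
- move=> L; have [ps e p] := X L.
  by exists (path_cat j (fun=> q) ps); [rewrite /path_cat leqnn | apply: cons].
Qed.

Definition dup_wins (sigma : Q -> Q -> Sigma -> Q -> Q) (p r : Q) :=
  forall (ps : nat -> Q) (al : nat -> Sigma), ps 0 = p ->
    (forall i, ps i.+1 \in delta A (ps i) (al i)) ->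
    forall i, ps i \in F -> exists2 k, i <= k & dup_play sigma r ps al k \in F.

Lemma dup_play_cons (sigma : Q -> Q -> Sigma -> Q -> Q) r p a ps al k :
  dup_play sigma r (fun t => if t is t'.+1 then ps t' else p)
    (fun t => if t is t'.+1 then al t' else a) k.+1
  = dup_play sigma (sigma r p a (ps 0)) ps al k.
Proof. by elim: k => //= k ->. Qed.

Lemma dup_wins_step sigma p r a p' : dup_wins sigma p r -> p' \in delta A p a ->
  dup_wins sigma p' (sigma r p a p').
Proof.
move=> W link ps al e0 step i psF.
have [|[|k] // ik] := W (fun t => if t is t'.+1 then ps t' else p)
  (fun t => if t is t'.+1 then al t' else a) erefl _ i.+1 psF.
- by case => [|t] //=; rewrite e0.
- by rewrite dup_play_cons e0 => kF; exists k.
Qed.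

Lemma dup_mirror sigma p q j ps : dup_strategy A sigma -> dup_wins sigma p q ->
  ps j = p -> (forall t, j <= t -> ps t.+1 \in delta A (ps t) (w t)) ->
  exists2 qs, qs j = q &
    [/\ forall t, j <= t -> qs t.+1 \in delta A (qs t) (w t),
        forall t, j <= t -> dup_wins sigma (ps t) (qs t) &
        forall t, j <= t -> ps t \in F -> exists2 m, t <= m & qs m \in F].
Proof.
move=> ds W e step.
pose ps' i := ps (j + i); pose al i := w (j + i).
have step' i : ps' i.+1 \in delta A (ps' i) (al i).
  by rewrite /ps' /al addnS; apply: step; apply: leq_addr.
pose dp := dup_play sigma q ps' al.
have win d : dup_wins sigma (ps' d) (dp d).
  elim: d => [|d IH]; first by rewrite /ps' addn0 e.
  exact: dup_wins_step IH (step' d).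
exists (fun t => dp (t - j)); first by rewrite subnn.
split=> t jt.
- have e_t : w t = al (t - j) by rewrite /al subnKC.
  by rewrite subSn // e_t; exact: ds _ _ _ _ (step' (t - j)).
- by have := win (t - j); rewrite /ps' subnKC.
- move=> psF; have e0 : ps' 0 = p by rewrite /ps' addn0.
  have psF' : ps' (t - j) \in F by rewrite /ps' subnKC.
  have [k tk kF] := W ps' al e0 step' (t - j) psF'.
  by exists (j + k); [lia | rewrite addKn].
Qed.

Lemma level_dup_wins sigma : dup_strategy A sigma ->
  forall k j p q, dup_wins sigma p q -> level k p j -> level k q j.
Proof.
move=> ds; elim=> [//|k IH] j p q W /= [lp X]; split; first exact: IH W lp.
case: ifP X => ok X.
- move=> ff; apply: X => L ps e jL p_path; apply/negP => psF.
  have [qs0 e0 ip0] := level_odd_ipath ok (proj2 p_path L jL (leqnn L)).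
  have ip := dag_ipath_cat jL e0 p_path ip0.
  have ej : path_cat L ps qs0 j = p by rewrite /path_cat jL.
  have [qs eq [step win hitF]] := dup_mirror ds W ej (fun t jt => proj1 (ip t jt)).
  have psF' : path_cat L ps qs0 L \in F by rewrite /path_cat leqnn.
  have [m Lm qsF] := hitF L jL psF'.
  suff mpath : dag_path (level k) j m qs.
    by have := ff m qs eq (leq_trans jL Lm) mpath; rewrite qsF.
  by split=> t jt _; [apply: step | apply: IH (win t jt) (proj2 (ip t jt))].
- have [ps e ip] := unbounded_ipath X.
  have [qs <- [step win _]] := dup_mirror ds W e (fun t jt => proj1 (ip t jt)).
  apply: dag_ipath_unbounded => t jt.
  by split; [apply: step | apply: IH (win t jt) (proj2 (ip t jt))].
Qed.

Lemma level_delayed_sim k j p q : delayed_sim A p q -> level k p j -> level k q j.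
Proof. by case=> sigma [ds W]; apply: level_dup_wins ds k j p q W. Qed.

End RunDag.

Lemma nonincreasing_eventually_constant (f : nat -> nat) a :
  (forall j, a <= j -> f j.+1 <= f j) ->
  exists2 T, a <= T & forall j, T <= j -> f j = f T.
Proof.
move=> dec; have mono b j : a <= b -> b <= j -> f j <= f b.
  move=> ab /subnK <-; elim: (j - b) => // d IH.
  by rewrite addSn (leq_trans (dec _ _)) // (leq_trans ab) ?leq_addl.
suff from v b : a <= b -> f b <= v -> exists2 T, b <= T & forall j, T <= j -> f j = f T.
  by have [T aT cT] := from (f a) a (leqnn a) (leqnn _); exists T.
elim: v b => [|v IH] b ab fb.
  by exists b => // j bj; have := mono b j ab bj; lia.
case: (classic (exists2 j, b <= j & f j < f b)) => [[j bj lt] | none].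
- have [|T jT cT] := IH j (leq_trans ab bj); first lia.
  by exists T => //; apply: leq_trans bj jT.
- exists b => // j bj; have := mono b j ab bj; rewrite leq_eqVlt => /orP[/eqP //|lt].
  by case: none; exists j.
Qed.

Section AcceptingRun.
Variables (Q Sigma : finType) (A : BA Q Sigma) (w : nat -> Sigma).

Local Notation F := (acc A).

Fixpoint reach (j : nat) : {set Q} :=
  if j is j'.+1 then delta_set A (reach j') (w j') else init A.

Lemma reach_step q q' t : q \in reach t -> q' \in delta A q (w t) -> q' \in reach t.+1.
Proof. by move=> hq hq'; apply/bigcupP; exists q. Qed.

Lemma reach_pred q' t : q' \in reach t.+1 -> exists2 q, q \in reach t & q' \in delta A q (w t).
Proof. by case/bigcupP => q; exists q. Qed.

Lemma reach_path V j L ps : ps j \in reach j -> dag_path A w V j L ps ->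
  forall t, j <= t -> t <= L -> ps t \in reach t.
Proof.
move=> hj [step _]; elim=> [|t IH] jt tL; first by have -> : 0 = j by lia.
case: (leqP j t) => jt'; last by have -> : t.+1 = j by lia.
exact: reach_step (IH jt' (ltnW tL)) (step t jt' tL).
Qed.

Lemma reach_ipath V j ps : ps j \in reach j -> dag_ipath A w V j ps ->
  forall t, j <= t -> ps t \in reach t.
Proof. by move=> hj ip t jt; apply: reach_path hj (dag_ipath_path t ip) t jt (leqnn t). Qed.

Definition state_set (s : cstate Q) := match s with Q1st X | Q2st X _ _ _ => X end.
Definition state_O (s : cstate Q) := match s with Q1st _ => set0 | Q2st _ U _ _ => U end.
Definition state_f (s : cstate Q) := match s with Q1st _ => [ffun=> 0] | Q2st _ _ f _ => f end.
Definition state_i (s : cstate Q) := match s with Q1st _ => 0 | Q2st _ _ _ i => i end.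
Definition isQ2 (s : cstate Q) := if s is Q2st _ _ _ _ then true else false.

Variable r : nat -> cstate Q.
Hypothesis r0 : r 0 = Q1st (init A).
Hypothesis r_step : forall j, ctrans A (@inQ2 Q Sigma A) (r j) (w j) (r j.+1).
Hypothesis r_acc : forall N, exists2 k, N <= k & caccepting (@inQ2 Q Sigma A) (r k).

Lemma run_set j : state_set (r j) = reach j.
Proof.
elim: j => [|j IH]; first by rewrite r0.
have := r_step j; case: (r j) IH => [S1|S1 O1 f1 i1] /= ->; case: (r j.+1) => //=.
- by move=> S2 O2 f2 i2 [].
- by move=> S2 O2 f2 i2 [[]].
Qed.

Variable j0 : nat.
Hypothesis r_j0 : isQ2 (r j0).

Local Notation O j := (state_O (r j)).
Local Notation f j := (state_f (r j)).
Local Notation i j := (state_i (r j)).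

Lemma run_Q2E j : j0 <= j -> r j = Q2st (reach j) (O j) (f j) (i j).
Proof.
move=> /subnK <-; rewrite -run_set; suff: isQ2 (r (j - j0 + j0)) by case: (r _).
elim: (j - j0) => // d IH; rewrite addSn.
by have := r_step (d + j0); case: (r (d + j0)) IH => // ? ? ? ? _; case: (r _).
Qed.

Lemma j0_gt0 : 0 < j0.
Proof. by case: j0 r_j0 => [|//]; rewrite r0. Qed.

Lemma run_inQ2 j : j0 <= j -> inQ2 A (reach j) (O j) (f j) (i j).
Proof.
case: j => [|j] le; first by have := j0_gt0; lia.
have := r_step j; rewrite (run_Q2E le) /=; case: (r j) => [S1|S1 O1 f1 i1] /=.
- by case.
- by case=> [[]].
Qed.

Lemma run_step j : j0 <= j ->
  [/\ forall q q', q \in reach j -> q' \in delta A q (w j) -> f j.+1 q' <= f j q,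
      rank (f j) = rank (f j.+1) &
      (O j = set0 /\ i j.+1 = (i j + 2) %% (rank (f j.+1) + 1) /\
         O j.+1 = reach j.+1 :&: [set q | f j.+1 q == i j.+1])
      \/ (O j != set0 /\ i j.+1 = i j /\
         O j.+1 = delta_set A (O j) (w j) :&: [set q | f j.+1 q == i j])].
Proof.
move=> le; have := r_step j; rewrite (run_Q2E le) (run_Q2E (leqW le)) /=.
by case=> _ mono eq_rank _ next; split.
Qed.

Lemma run_breakpoint N : exists2 k, N <= k & O k = set0.
Proof.
have [k le] := r_acc (maxn N j0).
rewrite (run_Q2E (leq_trans (leq_maxr _ _) le)) => -[_ e].
by exists k => //; apply: leq_trans (leq_maxl _ _) le.
Qed.

Local Notation R := (rank (f j0)).

Lemma run_rank j : j0 <= j -> rank (f j) = R.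
Proof.
move=> /subnK <-; elim: (j - j0) => // d IH.
by rewrite addSn; case: (run_step (leq_addl d j0)) => _ <- _.
Qed.

Lemma R_odd : odd R.
Proof. by case: (run_inQ2 (leqnn j0)) => _ _ []. Qed.

Lemma index_even j : j0 <= j -> ~~ odd (i j).
Proof. by case/run_inQ2 => _ _ _ []. Qed.

Lemma index_after_breakpoint u : j0 <= u -> O u = set0 ->
  i u.+1 = (i u + 2) %% (R + 1) /\ O u.+1 = reach u.+1 :&: [set q | f u.+1 q == i u.+1].
Proof.
move=> ju e; case: (run_step ju) => _ _ [[_ [-> ->]]|[ne _]]; last by rewrite e eqxx in ne.
by rewrite run_rank //; apply: leqW.
Qed.

Lemma index_between_breakpoints u u' : j0 <= u ->
  (forall t, u < t -> t < u' -> O t != set0) ->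
  forall t, u < t -> t <= u' -> i t = i u.+1.
Proof.
move=> ju ne; elim=> [//|t IH] ut tu; case: (leqP t u) => tu'.
  by have -> : t = u by lia.
rewrite -IH //; last lia.
case: (run_step (j := t) _) => [|_ _ [[e _]|[_ []]] //]; first lia.
by have := ne t tu' tu; rewrite e eqxx.
Qed.

Lemma next_breakpoint u : exists u', [/\ u < u', O u' = set0 &
  forall t, u < t -> t < u' -> O t != set0].
Proof.
have ex : exists t, (u < t) && (O t == set0).
  by have [t ut e] := run_breakpoint u.+1; exists t; rewrite ut e eqxx.
case: (ex_minnP ex) => u' /andP[ut /eqP e] min; exists u'; split => // t ut' tu.
by apply/negP => /eqP et; have := min t; rewrite ut' et eqxx => /(_ erefl); lia.
Qed.

Lemma index_cycles u0 : j0 <= u0 -> O u0 = set0 ->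
  forall s, exists u, [/\ u0 <= u, O u = set0 & i u.+1 = (i u0.+1 + 2 * s) %% (R + 1)].
Proof.
move=> ju0 e0; elim=> [|s [u [uu eu iu]]].
  exists u0; split => //; rewrite addn0 modn_small //.
  by rewrite (index_after_breakpoint ju0 e0).1 ltn_pmod // addn1.
have [u' [uu' eu' ne]] := next_breakpoint u.
exists u'; split => //; first lia.
rewrite (index_after_breakpoint _ eu').1; last lia.
rewrite (index_between_breakpoints _ ne) //; last lia.
by rewrite iu modnDml; congr (_ %% _); lia.
Qed.

Lemma index_hits N c : ~~ odd c -> c <= R ->
  exists u, [/\ N <= u, j0 <= u, O u = set0 & i u.+1 = c].
Proof.
move=> ev cR; have [u0 le e0] := run_breakpoint (maxn N j0).
have ju0 : j0 <= u0 by apply: leq_trans (leq_maxr _ _) le.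
have [x_def _] := index_after_breakpoint ju0 e0.
have x_lt : i u0.+1 < R + 1 by rewrite x_def ltn_pmod // addn1.
have x_ev : ~~ odd (i u0.+1) by apply: index_even; apply: leqW.
have [s es] : exists s, i u0.+1 + 2 * s = R + 1 + c.
  have := odd_double_half (i u0.+1); have := odd_double_half c; have := odd_double_half R.
  rewrite (negbTE x_ev) (negbTE ev) R_odd -!muln2 /= => hR hc hx.
  by exists (R./2 + 1 + c./2 - (i u0.+1)./2); lia.
have [u [uu eu iu]] := index_cycles ju0 e0 s.
exists u; split => //; try lia.
by rewrite iu es modnDl modn_small //; lia.
Qed.

Lemma run_ranking_path_mono V j L ps : j0 <= j -> ps j \in reach j ->
  dag_path A w V j L ps -> forall t, j <= t -> t <= L -> f t (ps t) <= f j (ps j).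
Proof.
move=> jj hj p; elim=> [|t IH] jt tL; first by have -> : 0 = j by lia.
case: (leqP j t) => jt'; last by have -> : t.+1 = j by lia.
apply: leq_trans (IH jt' (ltnW tL)).
case: (run_step (leq_trans jj jt')) => mono _ _; apply: mono (proj1 p t jt' tL).
exact: reach_path hj p t jt' (ltnW tL).
Qed.

(* The index i cycles through all even values up to R, so a path of constant
   even value c is caught in O at a breakpoint followed by index c, and from
   then on it keeps O nonempty. *)
Lemma run_no_even_ipath j ps c : j0 <= j -> ps j \in reach j -> ~~ odd c ->
  ~ dag_ipath A w (fun q t => f t q = c) j ps.
Proof.
move=> jj hj ev ip; have reach_ps := reach_ipath hj ip.
have cR : c <= R by rewrite -(proj2 (ip j (leqnn j))) -(run_rank jj); apply: leq_bigmax.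
have [u [ju ju0 eu iu]] := index_hits j ev cR.
have trapped t : u < t -> ps t \in O t /\ i t = c.
  elim: t => [//|t IH] ut; have jt : j0 <= t by lia.
  case: (leqP t u) => [tu | ut'].
    have -> : t = u by lia.
    have [_ ->] := index_after_breakpoint ju0 eu.
    by rewrite iu !inE reach_ps ?(proj2 (ip _ _)) ?eqxx //; lia.
  have [psO it] := IH ut'.
  case: (run_step jt) => _ _ [[e _] | [_ [-> ->]]]; first by rewrite e inE in psO.
  rewrite it !inE (proj2 (ip _ _)); last lia.
  rewrite eqxx andbT; split => //; apply/bigcupP; exists (ps t) => //.
  by apply: (proj1 (ip t _)); lia.
have [k uk ek] := run_breakpoint u.+1.
by have := (trapped k uk).1; rewrite ek inE.
Qed.

Lemma level_gt_run_ranking k j q : j0 <= j -> q \in reach j -> f j q < k ->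
  ~ level A w k q j.
Proof.
elim: k j q => [//|k IH] j q jj hq lt [lv X].
case: (ltnP (f j q) k) => [lt' | ge]; first exact: IH jj hq lt' lv.
have fq : f j q = k by lia.
have along L ps : ps j = q -> dag_path A w (level A w k) j L ps ->
    forall t, j <= t -> t <= L -> f t (ps t) = k.
  move=> e p t jt tL; have hj : ps j \in reach j by rewrite e.
  have := run_ranking_path_mono jj hj p jt tL; rewrite e fq => le.
  suff: ~ f t (ps t) < k by lia.
  move=> lt'; apply: IH lt' (proj2 p t jt tL); first lia.
  exact: reach_path hj p t jt tL.
case: ifP X => ok X.
- apply: X => L ps e jL p; apply/negP => psF.
  have [[_ evF] _ _ _ _] := run_inQ2 (leq_trans jj jL).
  by have := evF _ psF; rewrite (along L ps e p L jL (leqnn L)) ok.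
- have [ps e ip] := unbounded_ipath X.
  apply: (run_no_even_ipath jj _ (negbT ok) (ps := ps)); first by rewrite e.
  move=> t jt; split; first exact: proj1 (ip t jt).
  exact: (along t ps e (dag_ipath_path t ip) t jt (leqnn t)).
Qed.

Definition levelb k q j : bool := excluded_middle_informative (level A w k q j).

Lemma levelbP k q j : reflect (level A w k q j) (levelb k q j).
Proof. by rewrite /levelb; case: excluded_middle_informative => h; constructor. Qed.

(* Capping at 2n is harmless: by [level_gt_run_ranking], no reachable vertex from
   time j0 on is in G_{2n+1}. *)
Definition kvrank q j : nat := \max_(k < (2 * n Q).+1 | levelb k q j) k.

Lemma kvrank_le2n q j : kvrank q j <= 2 * n Q.
Proof. by apply/bigmax_leqP => k _; rewrite -ltnS. Qed.

Lemma kvrank_spec k q j : j0 <= j -> q \in reach j ->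
  level A w k q j <-> k <= kvrank q j.
Proof.
move=> jj hq; split=> [lv | le].
- have k_small : k < (2 * n Q).+1.
    rewrite ltnNge; apply/negP => big; apply: (level_gt_run_ranking jj hq _ lv).
    by case: (run_inQ2 jj) => [[bound _] _ _ _ _]; have := bound q; lia.
  have := leq_bigmax_cond (P := fun i : 'I_(2 * n Q).+1 => levelb i q j)
    (F := @nat_of_ord _) (Ordinal k_small).
  by apply; apply/levelbP.
- apply: NNPP => nlv; suff: kvrank q j < k by lia.
  case: k le nlv => [|k] le nlv; first by case: nlv.
  rewrite ltnS; apply/bigmax_leqP => k' /levelbP lv'; rewrite leqNgt; apply/negP => lt.
  exact: nlv (level_antimono lt lv').
Qed.

Lemma kvrank_level q j : j0 <= j -> q \in reach j -> level A w (kvrank q j) q j.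
Proof. by move=> jj hq; apply/(kvrank_spec _ jj hq). Qed.

Lemma kvrank_not_level q j : j0 <= j -> q \in reach j -> ~ level A w (kvrank q j).+1 q j.
Proof. by move=> jj hq /(kvrank_spec _ jj hq); rewrite ltnn. Qed.

Lemma kvrank_succ q q' j : j0 <= j -> q \in reach j -> q' \in delta A q (w j) ->
  kvrank q' j.+1 <= kvrank q j.
Proof.
move=> jj hq link; apply/(kvrank_spec _ jj hq); apply: (level_pred link).
by apply: kvrank_level; [apply: leqW | apply: reach_step link].
Qed.

Lemma kvrank_acc_even q j : j0 <= j -> q \in reach j -> q \in F -> ~~ odd (kvrank q j).
Proof.
move=> jj hq qF; apply/negP => od; apply: (kvrank_not_level jj hq); split => /=.
  exact: kvrank_level.
rewrite od => ff; suff p : dag_path A w (level A w (kvrank q j)) j j (fun=> q).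
  by have := ff j _ erefl (leqnn j) p; rewrite qF.
by split=> t jt tj; [lia | rewrite (_ : t = j); [apply: kvrank_level | lia]].
Qed.

Lemma kvrank_delayed_sim p q j : j0 <= j -> p \in reach j -> q \in reach j ->
  delayed_sim A p q -> kvrank p j <= kvrank q j.
Proof.
move=> jj hp hq ds; apply/(kvrank_spec _ jj hq).
exact: level_delayed_sim ds (kvrank_level jj hp).
Qed.

Lemma kvrank_even_bounded q j : j0 <= j -> q \in reach j -> ~~ odd (kvrank q j) ->
  ~ unbounded A w (level A w (kvrank q j)) q j.
Proof.
move=> jj hq ev ub; apply: (kvrank_not_level jj hq) => /=.
by rewrite (negbTE ev); split => //; apply: kvrank_level.
Qed.

Lemma kvrank_odd_Ffree q j : j0 <= j -> q \in reach j -> odd (kvrank q j) ->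
  Ffree A w (level A w (kvrank q j)) q j.
Proof.
move=> jj hq od; apply: NNPP => nf; apply: (kvrank_not_level jj hq) => /=.
by rewrite od; split => //; apply: kvrank_level.
Qed.

Definition kvrank_max j := \max_(q in reach j) kvrank q j.

Lemma reach_nonempty j : j0 <= j -> exists q, q \in reach j.
Proof.
case/run_inQ2 => _ _ [od tS _] _ _.
have r1 : 0 < rank (f j) by move: od; case: (rank _).
by case: (tS 1 erefl r1) => q hq _; exists q.
Qed.

Lemma kvrank_max_attained j : j0 <= j -> exists2 q, q \in reach j & kvrank q j = kvrank_max j.
Proof.
move=> jj; have [q0 hq0] := reach_nonempty jj.
have : 0 < #|reach j| by apply/card_gt0P; exists q0.
by case/(eq_bigmax_cond (fun q => kvrank q j)) => q hq e; exists q.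
Qed.

Lemma kvrank_le_max q j : q \in reach j -> kvrank q j <= kvrank_max j.
Proof. exact: leq_bigmax_cond. Qed.

Lemma kvrank_max_succ j : j0 <= j -> kvrank_max j.+1 <= kvrank_max j.
Proof.
move=> jj; apply/bigmax_leqP => q' /reach_pred[q hq link].
exact: leq_trans (kvrank_succ jj hq link) (kvrank_le_max hq).
Qed.

Lemma kvrank_max_le2n j : kvrank_max j <= 2 * n Q.
Proof. by apply/bigmax_leqP => q _; apply: kvrank_le2n. Qed.

(* Otherwise every reachable vertex of G_k stays in G_{k+1}, G_{k+2}, ... *)
Lemma odd_kvrank_attained k j1 q1 : odd k -> j0 <= j1 -> q1 \in reach j1 ->
  k < kvrank q1 j1 -> exists j q, [/\ j0 <= j, q \in reach j & kvrank q j = k].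
Proof.
move=> ok jj1 hq1 lt; apply: NNPP => none.
have above j q : j0 <= j -> q \in reach j -> level A w k q j -> level A w k.+1 q j.
  move=> jj hq lv; apply/(kvrank_spec _ jj hq); have := (kvrank_spec _ jj hq).1 lv.
  by rewrite leq_eqVlt => /orP[/eqP e | //]; case: none; exists j, q.
have stuck d j q : j0 <= j -> q \in reach j -> level A w k q j -> level A w (k + d) q j.
  elim: d j q => [|d IH] j q jj hq lv; first by rewrite addn0.
  have [_] := above j q jj hq lv; rewrite /= ok => nff.
  rewrite addnS /=; split; first exact: IH.
  case: ifP => _.
  - move=> ff; apply: nff => L ps e jL p; apply: ff => //; split; first exact: proj1 p.
    move=> t jt tL; apply: IH (proj2 p t jt tL); first lia.
    by apply: reach_path p t jt tL; rewrite e.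
  - have [ps e ip] := level_odd_ipath ok lv.
    rewrite -e; apply: dag_ipath_unbounded => t jt; split; first exact: proj1 (ip t jt).
    apply: IH (proj2 (ip t jt)); first lia.
    by apply: reach_ipath ip t jt; rewrite e.
have := stuck ((2 * n Q).+1 - k) j1 q1 jj1 hq1 ((kvrank_spec _ jj1 hq1).2 (ltnW lt)).
by move/(kvrank_spec _ jj1 hq1); have := kvrank_le2n q1 j1; lia.
Qed.

Lemma odd_kvrank_persists k j1 q1 : odd k -> j0 <= j1 -> q1 \in reach j1 ->
  kvrank q1 j1 = k -> forall j, j1 <= j -> exists2 q, q \in reach j & kvrank q j = k.
Proof.
move=> ok jj1 hq1 e.
have lv : level A w k q1 j1 by rewrite -e; apply: kvrank_level.
have ff : Ffree A w (level A w k) q1 j1 by rewrite -e; apply: kvrank_odd_Ffree; rewrite ?e.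
have [ps e0 ip] := level_odd_ipath ok lv.
move=> j le; have hj : ps j \in reach j by apply: reach_ipath ip j le; rewrite e0.
exists (ps j) => //; have jj : j0 <= j by lia.
have := (kvrank_spec _ jj hj).1 (proj2 (ip j le)).
rewrite leq_eqVlt => /orP[/eqP <- // | /(kvrank_spec _ jj hj)[_]].
rewrite /= ok => nff; exfalso; apply: nff.
by apply: Ffree_later le (dag_ipath_path j ip); rewrite e0.
Qed.

Section StableMax.
Variable T1 : nat.
Hypothesis T1_ge : j0 <= T1.
Hypothesis max_stable : forall j, T1 <= j -> kvrank_max j = kvrank_max T1.
Local Notation M := (kvrank_max T1).

(* If M were even, the vertices of rank M at time T1 would all be finite in G_M,
   yet the rank-M vertices of later levels trace back to them by paths in G_M. *)
Lemma M_odd : odd M.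
Proof.
apply: NNPP => /negP ev.
pose X t := [set q in reach t | kvrank q t == M].
have ne t : T1 <= t -> X t != set0.
  move=> le; apply/set0Pn; have [|q hq e] := kvrank_max_attained (j := t); first lia.
  by exists q; rewrite inE hq e max_stable // eqxx.
have back t q' : T1 <= t -> q' \in X t.+1 -> exists2 q, q \in X t & q' \in delta A q (w t).
  move=> le; rewrite inE => /andP[/reach_pred[q hq link] /eqP e']; exists q => //.
  have := kvrank_succ (leq_trans T1_ge le) hq link; have := kvrank_le_max hq.
  by rewrite max_stable // e' inE hq /= => ? ?; apply/eqP; lia.
have mem t q : T1 <= t -> q \in X t -> level A w M q t.
  by move=> le; rewrite inE => /andP[hq /eqP <-]; apply: kvrank_level hq; lia.
have [q] := backward_family_unbounded ne back mem.
rewrite inE => /andP[hq /eqP e]; rewrite -e.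
by apply: (kvrank_even_bounded T1_ge hq); rewrite e.
Qed.

Lemma odd_kvranks_eventually_present : exists2 T, T1 <= T &
  forall k, odd k -> k < M -> forall j, T <= j -> exists2 q, q \in reach j & kvrank q j = k.
Proof.
have time k : exists Tk, odd k -> k < M ->
    forall j, Tk <= j -> exists2 q, q \in reach j & kvrank q j = k.
  case: (boolP (odd k && (k < M))) => [/andP[ok kM] | nk]; last first.
    by exists 0 => ok kM; case/negP: nk; rewrite ok kM.
  have [q1 hq1 e1] := kvrank_max_attained T1_ge.
  have lt : k < kvrank q1 T1 by rewrite e1.
  have [j [q [jj hq e]]] := odd_kvrank_attained ok T1_ge hq1 lt.
  by exists j => _ _; apply: odd_kvrank_persists ok jj hq e.
have [Tk hTk] := choice _ time.
exists (maxn T1 (\max_(k < M) Tk k)) => [|k ok kM j le]; first exact: leq_maxl.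
apply: hTk => //; apply: leq_trans le; rewrite leq_max; apply/orP; right.
exact: (leq_bigmax (F := fun i : 'I_M => Tk i) (Ordinal kM)).
Qed.

Section NewRun.
Variable T : nat.
Hypothesis T_ge : T1 <= T.
Hypothesis present : forall k, odd k -> k < M ->
  forall j, T <= j -> exists2 q, q \in reach j & kvrank q j = k.

Definition kvranking j : {ffun Q -> nat} :=
  [ffun q => if q \in reach j then kvrank q j else 0].

Lemma kvranking_rank j : T1 <= j -> rank (kvranking j) = M.
Proof.
move=> le; apply/eqP; rewrite eqn_leq; apply/andP; split.
  apply/bigmax_leqP => q _; rewrite ffunE; case: ifP => hq //.
  by rewrite -(max_stable le); apply: kvrank_le_max.
have [|q hq e] := kvrank_max_attained (j := j); first lia.
by rewrite -(max_stable le) -e; have := leq_bigmax (F := kvranking j) q; rewrite ffunE hq.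
Qed.

Lemma kvranking_tight j : T <= j -> tight (reach j) (kvranking j).
Proof.
move=> le; have le1 : T1 <= j by lia.
split; first by rewrite kvranking_rank // M_odd.
- move=> k ok; rewrite kvranking_rank // leq_eqVlt => /orP[/eqP -> | kM].
    have [|q hq e] := kvrank_max_attained (j := j); first lia.
    by exists q; rewrite // ffunE hq e max_stable.
  by have [q hq e] := present ok kM le; exists q; rewrite // ffunE hq.
- by move=> q /negbTE hq; rewrite ffunE hq.
Qed.

Definition Oi_step j (s : {set Q} * nat) : {set Q} * nat :=
  if s.1 == set0 then
    let i' := (s.2 + 2) %% (M + 1) in (reach j.+1 :&: [set q | kvranking j.+1 q == i'], i')
  else (delta_set A s.1 (w j) :&: [set q | kvranking j.+1 q == s.2], s.2).

Fixpoint Oi j : {set Q} * nat :=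
  if j is j'.+1 then if j' <= T then (set0, 0) else Oi_step j' (Oi j') else (set0, 0).

Definition new_run j : cstate Q :=
  if j <= T then Q1st (reach j) else Q2st (reach j) (Oi j).1 (kvranking j) (Oi j).2.

Lemma Oi_inv j : T < j -> [/\ ~~ odd (Oi j).2, (Oi j).2 < M + 1 &
  (Oi j).1 \subset reach j :&: [set q | kvranking j q == (Oi j).2]].
Proof.
elim: j => [//|j IH] lt /=; case: (leqP j T) => le /=.
  by split; [| rewrite addn1 | apply: sub0set].
case: (IH le) => i_ev i_lt O_sub; rewrite /Oi_step; case: eqP => _ /=.
  split; [| by rewrite ltn_pmod // addn1 | exact: subxx].
  by rewrite odd_mod oddD /= ?addbF // M_odd.
split=> //; apply/subsetP => q /setIP[/bigcupP[p hp link] hq].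
rewrite inE hq andbT; apply: reach_step link.
by move/subsetP: O_sub => /(_ p hp) /setIP[].
Qed.

Lemma new_run_inQ2de j : T < j -> inQ2de A (reach j) (Oi j).1 (kvranking j) (Oi j).2.
Proof.
move=> lt; have jj : j0 <= j by lia.
case: (Oi_inv lt) => i_ev i_lt O_sub.
have tj := kvranking_tight (ltnW lt); have [rk_odd t_odd _] := tj.
split; first split.
- split => q; rewrite ffunE; case: ifP => hq //; first by apply: kvrank_le2n.
  by move=> qF; apply: kvrank_acc_even.
- split => // [k ok kl | q]; last by rewrite inE.
  by have [s _ e] := t_odd k ok kl; exists s.
- exact: tj.
- split => //.
  have := kvrank_max_le2n T1; have := odd_double_half M; rewrite M_odd -muln2; lia.
- exact: O_sub.
- move=> [p [q [hp hq sim]]]; rewrite !ffunE hp hq /ceil_even.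
  by have := kvrank_delayed_sim jj hp hq sim; lia.
Qed.

Lemma new_run_trans j : ctrans A (inQ2de A) (new_run j) (w j) (new_run j.+1).
Proof.
rewrite /new_run; case: (leqP j.+1 T) => lt1; first by rewrite ltnW.
case: (leqP j T) => le.
  have Oi0 : Oi j.+1 = (set0, 0) by rewrite /= le.
  have := new_run_inQ2de lt1; rewrite Oi0 => inQ.
  by split => //; apply: kvranking_tight; apply: ltnW.
have e : Oi j.+1 = Oi_step j (Oi j) by rewrite /= leqNgt le.
split.
- by split => //; apply: new_run_inQ2de.
- move=> q q' hq link; rewrite !ffunE hq (reach_step hq link).
  by apply: kvrank_succ => //; lia.
- by rewrite !kvranking_rank //; lia.
- by apply: kvranking_tight; apply: ltnW.
- rewrite e /Oi_step; case: eqP => e' /=; last by right; split => //; apply/eqP.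
  by left; rewrite kvranking_rank //; lia.
Qed.

Lemma Oi_next k : T < k -> (Oi k).1 != set0 ->
  Oi k.+1 =
    (delta_set A (Oi k).1 (w k) :&: [set q | kvranking k.+1 q == (Oi k).2], (Oi k).2).
Proof. by move=> lt ne; rewrite /= leqNgt lt /Oi_step (negbTE ne). Qed.

(* An O that never empties again would consist of vertices of one
   even rank c whose G_c-paths, traced back, would be unbounded. *)
Lemma new_run_accepting N : exists2 k, N <= k & caccepting (inQ2de A) (new_run k).
Proof.
set N' := maxn N T.+1; apply: NNPP => nacc.
have TN : T < N' by rewrite leq_max ltnSn orbT.
have ne k : N' <= k -> (Oi k).1 != set0.
  rewrite geq_max => /andP[Nk Tk]; apply/negP => /eqP e; apply: nacc; exists k => //.
  by rewrite /new_run leqNgt Tk; split => //; apply: new_run_inQ2de.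
set c := (Oi N').2.
have c_const t : N' <= t -> (Oi t).2 = c.
  move=> /subnK <-; elim: (t - N') => // d IH.
  by rewrite addSn Oi_next ?IH //; [lia | apply: ne; lia].
have back t q' : N' <= t -> q' \in (Oi t.+1).1 ->
    exists2 q, q \in (Oi t).1 & q' \in delta A q (w t).
  move=> le; rewrite Oi_next; [|lia|exact: ne].
  by case/setIP => /bigcupP[q hq link] _; exists q.
have mem t q : N' <= t -> q \in (Oi t).1 -> level A w c q t.
  move=> le qO; have [|_ _ /subsetP/(_ q qO)/setIP[hq]] := Oi_inv (j := t); first lia.
  by rewrite inE ffunE hq c_const // => /eqP <-; apply: kvrank_level hq; lia.
have [q qO ub] := backward_family_unbounded ne back mem.
have [_ _ /subsetP/(_ q qO)/setIP[hq]] := Oi_inv TN.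
rewrite inE ffunE hq -/c => /eqP e; rewrite -e in ub.
by apply: (kvrank_even_bounded _ hq) ub; [lia | rewrite e; case: (Oi_inv TN)].
Qed.

End NewRun.
End StableMax.

Lemma BSde_accepts_of_Q2_run : clang A (inQ2de A) w.
Proof.
have [T1 T1_ge stable] := nonincreasing_eventually_constant kvrank_max_succ.
have [T T_ge present] := odd_kvranks_eventually_present T1_ge.
exists (new_run T1 T); split.
- by rewrite /new_run leq0n.
- exact: (new_run_trans T1_ge stable T_ge present).
- exact: (new_run_accepting T1_ge stable T_ge present).
Qed.

End AcceptingRun.

Lemma clang_transfer (Q Sigma : finType) (A : BA Q Sigma)
    (P P' : {set Q} -> {set Q} -> {ffun Q -> nat} -> nat -> Prop)
    (w : nat -> Sigma) (r : nat -> cstate Q) :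
  r 0 = Q1st (init A) -> (forall j, ctrans A P (r j) (w j) (r j.+1)) ->
  (forall N, exists2 k, N <= k & caccepting P (r k)) ->
  (forall j S O f i, r j = Q2st S O f i -> P S O f i -> P' S O f i) ->
  clang A P' w.
Proof.
move=> r0 step acc PP'; exists r; split => //.
  move=> j; have := step j; have := PP' j.+1.
  case: (r j) => [S1|S1 O1 f1 i1]; case: (r j.+1) => //= S2 O2 f2 i2 /(_ _ _ _ _ erefl) h.
  - by case=> /h *; split.
  - by case=> -[/h *] *; split.
move=> N; have [k le hk] := acc N; exists k => //; move: hk (PP' k).
by case: (r k) => //= S1 O1 f1 i1 [P1 e] /(_ _ _ _ _ erefl) /(_ P1).
Qed.

Theorem lemma3 (Q Sigma : finType) (A : BA Q Sigma) :
  0 < #|Sigma| -> complete A ->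
  forall w : nat -> Sigma, lang_BSde A w <-> lang_BS A w.
Proof.
move=> _ _ w; split.
  by case=> r [r0 step acc]; apply: (clang_transfer r0 step acc) => j S O f i _ [].
case=> r [r0 step acc]; case: (classic (exists j0, isQ2 (r j0))) => [[j0 Q2j0] | noQ2].
  exact: (BSde_accepts_of_Q2_run r0 step acc Q2j0).
apply: (clang_transfer r0 step acc) => j S O f i rj.
by case: noQ2; exists j; rewrite rj.
Qed.
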